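(* For every integer $n\ge1$, $$B_n(t)=CB_n(t)+\frac{1}{n}(1-t)\,CB_n'(t),$$ where $CB_n'(t)$ denotes the derivative of the polynomial $CB_n(t)$ with respect to $t$.
   Context: For $\pi=[\pi_1,\ldots,\pi_n]\in S_n$ (one-line notation), a pair $(\pi_i,\pi_{i+1})$ with $1\le i\le n-1$ is a (regular) bond if $\pi_i-\pi_{i+1}=\pm1$. The pair $(\pi_n,\pi_1)$ is an edge bond if $\pi_n-\pi_1=\pm1$. A cyclic bond is a regular bond or an edge bond. Let $bnd(\pi)$ be the number of regular bonds and $cbnd(\pi)$ the number of cyclic bonds of $\pi$. For $n\ge1$ let $B_n(t)=\sum_{\pi\in S_n}t^{bnd(\pi)}$ and $CB_n(t)=\sum_{\pi\in S_n}t^{cbnd(\pi)}$. In particular each permutation of $S_2$ has $2$ cyclic bonds (so $CB_2(t)=2t^2$), and $B_1(t)=CB_1(t)=1$. *)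

From mathcomp Require Import all_boot all_order all_algebra all_fingroup.
Set Implicit Arguments. Unset Strict Implicit. Unset Printing Implicit Defensive.
Import GRing.Theory.

(* Permutations of S_n are elements of 'S_n = {perm 'I_n}; the one-line
   notation is [s 0; s 1; ...; s (n-1)] (values 0..n-1 instead of 1..n,
   which does not affect differences). *)

Definition adjb (a b : nat) : bool := (a == b.+1) || (b == a.+1).

Definition oneline (n : nat) (s : 'S_n) : seq nat := [seq val (s i) | i <- enum 'I_n].

Definition bnd (n : nat) (s : 'S_n) : nat :=
  \sum_(0 <= i < n.-1) adjb (nth 0 (oneline s) i) (nth 0 (oneline s) i.+1).

Definition ebnd (n : nat) (s : 'S_n) : nat :=
  if (0 < n)%N then nat_of_bool (adjb (nth 0 (oneline s) n.-1) (nth 0 (oneline s) 0)) else 0%N.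

Definition cbnd (n : nat) (s : 'S_n) : nat := bnd s + ebnd s.

Definition Bpoly (n : nat) : {poly rat} := \sum_(s : 'S_n) 'X^(bnd s).
Definition CBpoly (n : nat) : {poly rat} := \sum_(s : 'S_n) 'X^(cbnd s).

From mathcomp Require Import all_boot all_order all_algebra all_fingroup.
Import GRing.Theory.

Set Implicit Arguments.
Unset Strict Implicit.
Unset Printing Implicit Defensive.

(* Rotating the positions of a permutation cyclically preserves its cyclic
   bonds; the rotation starting at position j makes the pair at positions
   j - 1, j the edge pair, so it loses one regular bond exactly when that pair
   is a bond.  Hence the n rotations of a permutation with c cyclic bonds
   have c regular bonds n - c times and c - 1 regular bonds c times,
   contributing n t^c + (1 - t) (t^c)' to n B_n(t); as each rotation is a
   bijection of S_n, summing over all permutations gives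
   n B_n = n CB_n + (1 - t) CB_n'. *)

Lemma nth_oneline n (s : 'S_n) (i : 'I_n) : nth 0 (oneline s) i = val (s i).
Proof. by rewrite /oneline (nth_map i) ?size_enum_ord // nth_ord_enum. Qed.

Section Rotations.
Variable m : nat.
Local Notation n := m.+1.

Definition cbond (s : 'S_n) (i : 'I_n) : bool := adjb (s i) (s (ordS i)).

Lemma bnd_cbondE (s : 'S_n) : bnd s = \sum_(i < m) cbond s (widen_ord (leqnSn m) i).
Proof.
rewrite /bnd big_mkord; apply: eq_bigr => i _.
have -> : i.+1 = ordS (widen_ord (leqnSn m) i) :> nat.
  by rewrite /= modn_small // ltnS ltn_ord.
by rewrite (nth_oneline s (widen_ord _ i)) nth_oneline.
Qed.

Lemma cbnd_cbondE (s : 'S_n) : cbnd s = \sum_(i < n) cbond s i.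
Proof.
rewrite /cbnd bnd_cbondE big_ord_recr /ebnd /=; congr (_ + _)%N.
rewrite (nth_oneline s ord_max) (nth_oneline s ord0) /cbond.
by have -> : ordS (@ord_max m) = ord0 by apply: val_inj; rewrite /= modnn.
Qed.

Definition rot (j : 'I_n) : 'S_n := perm (addrI j).

Lemma cbond_rot (j : 'I_n) (s : 'S_n) i : cbond (rot j * s) i = cbond s (j + i)%R.
Proof.
rewrite /cbond !permM !permE; congr (adjb _ (val (s _))); apply: val_inj.
case: j i => [a _] [b _] /=.
by rewrite modnDmr -[in RHS]add1n modnDmr addnS add1n.
Qed.

Lemma cbnd_rot (j : 'I_n) (s : 'S_n) : cbnd (rot j * s) = cbnd s.
Proof.
rewrite !cbnd_cbondE [RHS](reindex_inj (addrI j)) /=.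
by apply: eq_bigr => i _; rewrite cbond_rot.
Qed.

(* [j + ord_max] is [j - 1] in Z/nZ. *)
Lemma bnd_rot (j : 'I_n) (s : 'S_n) :
  bnd (rot j * s) + cbond s (j + ord_max)%R = cbnd s.
Proof. by rewrite -(cbnd_rot j) [RHS]cbnd_cbondE big_ord_recr bnd_cbondE cbond_rot. Qed.

Lemma sum_cbond_cut (s : 'S_n) : \sum_(j < n) cbond s (j + ord_max)%R = cbnd s.
Proof. by rewrite cbnd_cbondE [RHS](reindex_inj (addIr ord_max)). Qed.

End Rotations.

Local Open Scope ring_scope.

Lemma sum_Xn_drop (R : nzRingType) (I : finType) (c : nat)
    (b : I -> nat) (e : I -> bool) :
    (forall i, b i + e i = c)%N -> (\sum_i e i)%N = c ->
  \sum_i 'X^(b i) = 'X^c *+ #|I| + (1 - 'X) * ('X^c)^`() :> {poly R}.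
Proof.
move=> bE eE.
have XbE i : 'X^(b i) = 'X^c + (1 - 'X) * 'X^(c.-1) *+ e i :> {poly R}.
  rewrite -(bE i); case: (e i); last by rewrite addn0 addr0.
  by rewrite addn1 /= mulrBl mul1r -exprS addrC subrK.
rewrite (eq_bigr _ (fun i _ => XbE i)) big_split sumr_const sumrMnr eE /=.
by rewrite derivXn mulrnAr.
Qed.

Lemma sum_rot_Xbnd (R : nzRingType) m (s : 'S_m.+1) :
  \sum_(j < m.+1) 'X^(bnd (rot j * s)) =
  'X^(cbnd s) *+ m.+1 + (1 - 'X) * ('X^(cbnd s))^`() :> {poly R}.
Proof. by rewrite (sum_Xn_drop _ (fun j => bnd_rot j s) (sum_cbond_cut s)) card_ord. Qed.

Lemma Bpoly_mulrn m :
  Bpoly m.+1 *+ m.+1 = CBpoly m.+1 *+ m.+1 + (1 - 'X) * (CBpoly m.+1)^`().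
Proof.
have Bpoly_rot (j : 'I_m.+1) : Bpoly m.+1 = \sum_s 'X^(bnd (rot j * s)).
  by rewrite /Bpoly (reindex_inj (mulgI (rot j))).
rewrite -[X in _ *+ X](card_ord m.+1) -sumr_const (eq_bigr _ (fun j _ => Bpoly_rot j)).
rewrite exchange_big (eq_bigr _ (fun s _ => sum_rot_Xbnd _ s)) big_split /=.
by rewrite -sumrMnl /CBpoly raddf_sum mulr_sumr.
Qed.

Theorem theorem2p2 (n : nat) : (1 <= n)%N ->
  Bpoly n = CBpoly n + (n%:R)^-1 *: ((1 - 'X) * (CBpoly n)^`()).
Proof.
case: n => // m _; have n_neq0 : m.+1%:R != 0 :> rat by rewrite Num.Theory.pnatr_eq0.
apply: (scalerI n_neq0).
by rewrite scalerDr scalerA mulfV // scale1r !scaler_nat Bpoly_mulrn.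
Qed.
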